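(* Let $G$ be a finite group and $p$ a prime. The following are equivalent: (a) $G$ has a power-free decomposition $G=C\uplus B$ in which $C$ is a cyclic $p$-subgroup of $G$; (b) one of the following holds: (1) $p=2$ and $G$ is an elementary abelian $2$-group of order $\geqslant4$; (2) $p=2$ and $G$ is the dihedral group $D_{2^m}$ of order $2^m$ for some integer $m\geqslant3$; (3) $p>2$ and $G$ is the dihedral group $D_{2p^n}$ of order $2p^n$ (for some $n\geqslant1$), i.e. a Frobenius group with cyclic kernel of order $p^n$ and complement of order $2$.
   Context: The power graph $\mathcal{P}(G)$ of a finite group $G$ has vertex set $G$, two distinct elements being adjacent when one is a power of the other. A power-free decomposition of $G$ is a partition $G=C\uplus B$ where $C$ is a cyclic $p$-subgroup of $G$ of maximal order (for some prime $p$) and $B$ is a subset with $|B|>1$ that is an independent set (pairwise nonadjacent vertices) of $\mathcal{P}(G)$. *)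

From mathcomp Require Import all_boot all_fingroup all_solvable.
Set Implicit Arguments.
Unset Strict Implicit.
Unset Printing Implicit Defensive.
Local Open Scope group_scope.

Definition power_adj (gT : finGroupType) (x y : gT) : Prop :=
  x <> y /\ ((exists k, x = y ^+ k) \/ (exists k, y = x ^+ k)).

Definition power_independent (gT : finGroupType) (B : {set gT}) : Prop :=
  forall x y, x \in B -> y \in B -> ~ power_adj x y.

Definition max_cyclic_psubgroup (gT : finGroupType) (p : nat)
    (G C : {group gT}) : Prop :=
  [/\ C \subset G, cyclic C, p.-group C, C :!=: 1 &
      forall D : {group gT}, D \subset G -> cyclic D -> p.-group D ->
        #|D| <= #|C|].

Definition power_free_decomposition (gT : finGroupType) (p : nat)
    (G C : {group gT}) (B : {set gT}) : Prop :=
  [/\ max_cyclic_psubgroup p G C, C :|: B = G, [disjoint C & B],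
      1 < #|B| & power_independent B].

From mathcomp Require Import all_boot all_fingroup all_solvable.
From mathcomp Require Import zify.

(* If G = C (+) B is power-free, every g in B is an involution, since g^-1 is
   a power of g lying in B as well; thus every element of G outside the
   cyclic group C = <[c]> is an involution.  If c ^+ 2 = 1, G has exponent 2.
   Otherwise every such involution x inverts C, because x * c is an involution
   too; so a product of two of them centralises c, hence lies in C.  Then
   G = C :|: x *: C is generated by the involutions x and x * c, and is
   dihedral of order 2 #|C|.  Conversely, taking for C a subgroup of order 2,
   resp. the cyclic subgroup of index 2, its complement B consists of
   involutions, and sets of involutions are independent in the power graph. *)
Set Implicit Arguments.
Unset Strict Implicit.
Unset Printing Implicit Defensive.
Local Open Scope group_scope.

Lemma expg_invol (gT : finGroupType) (x : gT) k :
  x ^+ 2 = 1 -> x ^+ k = x ^+ odd k.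
Proof. by move=> x2; rewrite -modn2 expg_mod. Qed.

Lemma invg_invol (gT : finGroupType) (x : gT) : x ^+ 2 = 1 -> x^-1 = x.
Proof. by move=> x2; apply/eqP; rewrite eq_invg_mul -(expg1 x) -expgS x2. Qed.

Lemma power_independent_invol (gT : finGroupType) (B : {set gT}) :
  1 \notin B -> {in B, forall x, x ^+ 2 = 1} -> power_independent B.
Proof.
move=> B'1 invB x y xB yB [neq_xy].
have ntB z : z \in B -> z <> 1 by move=> zB z1; rewrite -z1 zB in B'1.
case=> -[k];
  [rewrite (expg_invol _ (invB y yB)) | rewrite (expg_invol _ (invB x xB))];
  case: (odd k) => e.
- exact: neq_xy e.
- exact: ntB x xB e.
- exact: neq_xy (esym e).
- exact: ntB y yB e.
Qed.

Section InvolutionsOutside.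

Variables (gT : finGroupType) (G H : {group gT}).
Hypotheses (sHG : H \subset G) (invGH : {in G :\: H, forall g, g ^+ 2 = 1}).

Lemma exponent2_invol_outside : exponent H %| 2 -> exponent G %| 2.
Proof.
move=> /exponentP expH; apply/exponentP => g Gg.
by have [/expH | H'g] := boolP (g \in H); last by apply: invGH; rewrite inE H'g.
Qed.

Lemma max_card_cyclic_invol_outside (D : {group gT}) :
  H :!=: 1 -> D \subset G -> cyclic D -> #|D| <= #|H|.
Proof.
move=> ntH sDG /cyclicP[d defD]; rewrite defD.
have Gd : d \in G by rewrite -cycle_subG -defD.
have [Hd | H'd] := boolP (d \in H).
  by rewrite subset_leq_card ?cycle_subG.
have: #[d] %| 2 by rewrite order_dvdn invGH // inE H'd.
by move/(dvdn_leq (isT : 0 < 2))/leq_trans; apply; rewrite cardG_gt1.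
Qed.

Lemma invol_outside_pfd (p : nat) :
  cyclic H -> p.-group H -> H :!=: 1 -> #|H|.+1 < #|G| ->
  power_free_decomposition p G H (G :\: H).
Proof.
move=> cycH pH ntH ltHG; split.
- by split=> // D sDG cycD _; apply: max_card_cyclic_invol_outside.
- by rewrite -{1}(setIidPr sHG) setID.
- by rewrite disjoint_sym; apply/setDidPl; rewrite setDDl setUid.
- by rewrite cardsD (setIidPr sHG) ltn_subRL addn1.
- by apply: power_independent_invol; rewrite // inE group1.
Qed.

Lemma conjg_invol_outside x h : x \in G :\: H -> h \in H -> h ^ x = h^-1.
Proof.
move=> G'x Hh; have [Gx H'x] := setDP G'x.
have G'hx : h * x \in G :\: H.
  by rewrite inE groupMl // H'x groupM // (subsetP sHG).
have := invGH G'hx; rewrite expgS expg1 => hx2.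
apply/eqP; rewrite eq_sym eq_invg_mul /conjg (invg_invol (invGH G'x)).
by rewrite mulgA hx2.
Qed.

Lemma mulg_invol_outside c x y : c \in H -> c ^+ 2 != 1 ->
  x \in G :\: H -> y \in G :\: H -> x * y \in H.
Proof.
move=> Hc c2 G'x G'y; apply: contraR c2 => H'xy.
have G'xy : x * y \in G :\: H.
  by rewrite inE H'xy groupM // ?(setDP G'x).1 ?(setDP G'y).1.
have := conjg_invol_outside G'xy Hc.
rewrite conjgM !conjg_invol_outside ?groupV // invgK => /esym/eqP.
by rewrite eq_invg_mul -(expg1 c) -expgS.
Qed.

Lemma setD_lcoset_invol_outside c x : c \in H -> c ^+ 2 != 1 ->
  x \in G :\: H -> G :\: H = x *: H.
Proof.
move=> Hc c2 G'x; have [Gx H'x] := setDP G'x.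
apply/setP=> g; rewrite mem_lcoset (invg_invol (invGH G'x)).
apply/idP/idP; first exact: mulg_invol_outside Hc c2 G'x.
move=> Hxg; rewrite -(mulKg x g) (invg_invol (invGH G'x)).
by rewrite inE groupMr // H'x groupM // (subsetP sHG).
Qed.

Lemma card_invol_outside c : c \in H -> c ^+ 2 != 1 -> H \proper G ->
  #|G| = #|H|.*2.
Proof.
move=> Hc c2 /properP[_ [x Gx H'x]].
have G'x : x \in G :\: H by rewrite inE H'x.
rewrite -addnn -{2}(card_lcoset H x) -(setD_lcoset_invol_outside Hc c2 G'x).
by rewrite -{1}(setIidPr sHG) cardsID.
Qed.

Lemma dihedral_invol_outside c : H :=: <[c]> -> c ^+ 2 != 1 -> H \proper G ->
  G \isog 'D_(#|H|.*2).
Proof.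
move=> defH c2 ltHG; have [_ [x Gx H'x]] := properP ltHG.
have Hc : c \in H by rewrite defH cycle_id.
have G'x : x \in G :\: H by rewrite inE H'x.
have G'xc : x * c \in G :\: H.
  by rewrite inE groupMr // H'x groupM // (subsetP sHG).
have ntG' g : g \in G :\: H -> g != 1.
  by case/setDP=> _ H'g; apply: contraNneq H'g => ->.
have ox := nt_prime_order (isT : prime 2) (invGH G'x) (ntG' x G'x).
have oxc := nt_prime_order (isT : prime 2) (invGH G'xc) (ntG' _ G'xc).
have x'xc : x != x * c.
  by apply: contra c2; rewrite -{1}(mulg1 x) => /eqP/mulgI <-; rewrite expg1n.
have defG : <<[set x; x * c]>> = G.
  apply/eqP; rewrite eqEsubset gen_subG subUset !sub1set Gx.
  rewrite (setDP G'xc).1 -{1}(setID G H) (setIidPr sHG).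
  rewrite (setD_lcoset_invol_outside Hc c2 G'x) subUset.
  have Kc : c \in <<[set x; x * c]>>.
    by rewrite -{1}(mulKg x c) groupM ?groupV ?mem_gen ?set21 ?set22.
  have sHK : H \subset <<[set x; x * c]>> by rewrite defH cycle_subG.
  rewrite sHK; apply/subsetP=> _ /lcosetP[h Hh ->].
  by rewrite groupM ?(subsetP sHK h Hh) // mem_gen ?set21.
have := involutions_gen_dihedral ox oxc x'xc.
by rewrite /= defG (card_invol_outside Hc c2 ltHG).
Qed.

End InvolutionsOutside.

Section PowerFreeDecomposition.

Variables (gT : finGroupType) (p : nat) (G C : {group gT}) (B : {set gT}).
Hypothesis pfdG : power_free_decomposition p G C B.

Lemma pfd_setD : B = G :\: C.
Proof.
case: pfdG => _ <- disCB _ _.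
by rewrite setDUl setDv set0U; apply/esym/setDidPl; rewrite disjoint_sym.
Qed.

Lemma pfd_card_gt : #|C|.+1 < #|G|.
Proof.
have [[sCG _ _ _ _] _ _ B_gt1 _] := pfdG.
by move: B_gt1; rewrite pfd_setD cardsD (setIidPr sCG) ltn_subRL addn1.
Qed.

Lemma pfd_invol : {in G :\: C, forall g, g ^+ 2 = 1}.
Proof.
move=> g G'g; have [_ _ _ _ indepB] := pfdG.
have G'gV : g^-1 \in G :\: C by rewrite !inE !groupV -in_setD.
have [gVg | gV'g] := eqVneq g^-1 g; first by rewrite expgS expg1 -{1}gVg mulVg.
case: (indepB g^-1 g); rewrite ?pfd_setD //; split; first exact/eqP.
by left; exists #[g].-1; apply: invg_expg.
Qed.

Lemma pfd_abelem : exponent C %| 2 -> [/\ p = 2, 2.-abelem G & 4 <= #|G|].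
Proof.
move=> expC; have [[_ cycC pC ntC _] _ _ _ _] := pfdG.
have [p_pr p_dvd_C _] := pgroup_pdiv pC ntC.
split.
- apply/eqP; rewrite eqn_leq prime_gt1 // andbT dvdn_leq //.
  by rewrite (dvdn_trans p_dvd_C) // -exponent_cyclic.
- exact: exponent2_abelem (exponent2_invol_outside pfd_invol expC).
- by apply: leq_trans pfd_card_gt; rewrite !ltnS cardG_gt1.
Qed.

Lemma pfd_dihedral : ~~ (exponent C %| 2) -> G \isog 'D_(#|C|.*2).
Proof.
move=> expC'; have [[sCG cycC _ _ _] _ _ _ _] := pfdG.
have [c defC] := cyclicP cycC.
apply: (dihedral_invol_outside sCG pfd_invol defC).
  by rewrite -order_dvdn -exponent_cycle -defC.
by rewrite properEcard sCG (ltnW pfd_card_gt).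
Qed.

End PowerFreeDecomposition.

Lemma dihedral_cycle_invol (gT : finGroupType) q (G : {group gT}) :
  1 < q -> G \isog 'D_(q.*2) ->
  exists2 x, #[x] = q &
    [/\ <[x]> \subset G, #|G| = q.*2 & {in G :\: <[x]>, forall g, g ^+ 2 = 1}].
Proof.
move=> q_gt1 /(isoGrpP _ (Grp_dihedral q_gt1)).
rewrite card_dihedral // => -[oG].
case/existsP=> -[x y] /= /eqP[defG xq y2 xy].
have{} defG: <[x]> * <[y]> = G.
  by rewrite -norm_joinEr // norms_cycle xy groupV cycle_id.
have X'y: y \notin <[x]>.
  apply: contraL (ltn_Pmull (isT : 1 < 2) (ltnW q_gt1)) => Xy.
  rewrite -leqNgt mul2n -oG -defG mulGSid ?cycle_subG //.
  by rewrite dvdn_leq ?(ltnW q_gt1) // order_dvdn xq.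
have oy: #[y] = 2 by apply: nt_prime_order (group1_contra X'y).
have ox: #[x] = q.
  apply: double_inj; rewrite -muln2 -oy -oG -defG TI_cardMg //.
  by rewrite setIC prime_TIg ?cycle_subG // -orderE oy.
exists x => //; split=> //; first by rewrite -defG mulG_subl.
move=> g /setDP[]; rewrite -defG => /mulsgP[a b Xa Yb ->] X'ab.
move: Yb; rewrite cycle2g // !inE => /pred2P[b1 | ->].
  by move: X'ab; rewrite b1 mulg1 Xa.
have ya : a ^ y = a^-1 by case/cycleP: Xa => i ->; rewrite conjXg xy expgVn.
rewrite expgS expg1 -mulgA (mulgA y) -{1}(invg_invol y2) -/(conjg _ _).
by rewrite -mulgA -/(conjg _ _) ya mulgV.
Qed.

Lemma dihedral_pfd (gT : finGroupType) p n (G : {group gT}) :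
  prime p -> 0 < n -> G \isog 'D_((p ^ n).*2) ->
  exists (C : {group gT}) (B : {set gT}), power_free_decomposition p G C B.
Proof.
move=> p_pr n_gt0 isoG.
have q_gt1 : 1 < p ^ n by rewrite -(exp1n n) ltn_exp2r // prime_gt1.
have [x ox [sXG oG invG]] := dihedral_cycle_invol q_gt1 isoG.
exists <[x]>%G, (G :\: <[x]>); apply: invol_outside_pfd => //.
- exact: cycle_cyclic.
- by rewrite /pgroup -orderE ox pnatX pnat_id.
- by rewrite -cardG_gt1 -orderE ox.
- by rewrite oG -orderE ox; lia.
Qed.

Lemma abelem2_pfd (gT : finGroupType) (G : {group gT}) :
  2.-abelem G -> 4 <= #|G| ->
  exists (C : {group gT}) (B : {set gT}), power_free_decomposition 2 G C B.
Proof.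
move=> abG G_ge4; have ntG : G :!=: 1 by rewrite -cardG_gt1 (leq_trans _ G_ge4).
have [x Gx ntx] := trivgPn _ ntG.
have ox := abelem_order_p abG Gx ntx.
have /exponentP expG : exponent G %| 2.
  by move: abG; rewrite abelemE // => /andP[].
exists <[x]>%G, (G :\: <[x]>); apply: invol_outside_pfd.
- by rewrite cycle_subG.
- by move=> g /setDP[/expG].
- exact: cycle_cyclic.
- by rewrite /pgroup -orderE ox.
- by rewrite -cardG_gt1 -orderE ox.
- by rewrite -orderE ox.
Qed.

Unset Implicit Arguments.
Set Strict Implicit.

Theorem theorem3p8 (gT : finGroupType) (G : {group gT}) (p : nat) :
  prime p ->
  (exists (C : {group gT}) (B : {set gT}), power_free_decomposition p G C B)
  <->
  [\/ (p = 2 /\ 2.-abelem G /\ 4 <= #|G|),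
      (p = 2 /\ exists m, 3 <= m /\ G \isog 'D_(2 ^ m)) |
      (2 < p /\ exists n, 1 <= n /\ G \isog 'D_(2 * p ^ n))].
Proof.
move=> p_pr; split=> [[C [B pfdG]] | ].
- have [[_ _ pC ntC _] _ _ _ _] := pfdG.
  have [_ _ [k oC]] := pgroup_pdiv pC ntC.
  have [expC | expC'] := boolP (exponent C %| 2).
    by have [p2 abG G_ge4] := pfd_abelem pfdG expC; apply: Or31.
  have := pfd_dihedral pfdG expC'; rewrite oC => isoG.
  have [p2 | p'2] := eqVneq p 2.
  + apply: Or32; split=> //; exists k.+2.
    split; last by rewrite expnS mul2n -p2.
    case: k oC {isoG} => // oC; case/negP: expC'.
    by rewrite (dvdn_trans (exponent_dvdn C)) // oC p2.
  + apply: Or33; split; first by have := prime_gt1 p_pr; move/eqP: p'2; lia.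
    by exists k.+1; rewrite mul2n.
- case=> [[-> [abG G_ge4]] | [-> [[|m] [m_ge3 isoG]]] | [_ [n [n_gt0 isoG]]]].
  + exact: abelem2_pfd.
  + by [].
  + apply: (dihedral_pfd (isT : prime 2) (ltnW m_ge3)).
    by rewrite -mul2n -expnS.
  + by apply: (dihedral_pfd p_pr n_gt0); rewrite -mul2n.
Qed.
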